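(* Let $\lambda\in P$ with $\sharp^{(k,r)}(\lambda)\le1$. Then there is no $\mu\in P$, $\mu\ne\lambda$, with $t^{\rho(\mu)_i}q^{\mu_i}=t^{\rho(\lambda)_i}q^{\lambda_i}$ for all $i$ at the specialization $(\ast)$.
   Context: Let $P=\mathbb Z^n$. For $\lambda\in P$, $\rho(\lambda)$ is the unique permutation of $(\frac{n-1}2,\dots,-\frac{n-1}2)$ with $\rho(\lambda)_i>\rho(\lambda)_j$ iff $\lambda_i>\lambda_j$ or ($\lambda_i=\lambda_j$, $i<j$). Fix $1\le k\le n-1$, $r\ge2$, $g=\gcd(k+1,r-1)$, $\tau=e^{2\pi\sqrt{-1}/(r-1)}$, specialization $(\ast)$: $t=u^{(r-1)/g}$, $q=\tau u^{-(k+1)/g}$ (so $t^{k+1}q^{r-1}=1$). $u_\lambda(f)=f(t^{-\rho(\lambda)_1}q^{-\lambda_1},\dots,t^{-\rho(\lambda)_n}q^{-\lambda_n})$. A wheel in $\lambda$ is a tuple $(i_1,\dots,i_{k+1})$ of distinct indices such that, at $(\ast)$, $u_\lambda(x_{i_{a+1}})=u_\lambda(x_{i_a})tq^{s_a}$ ($1\le a\le k$) for some $s_a\in\mathbb Z_{\ge0}$ with $\sum s_a\le r-2$ and $i_a<i_{a+1}$ whenever $s_a=0$. Wheels that are cyclic rotations of each other are identified; $\sharp^{(k,r)}(\lambda)$ is the number of classes of wheels in $\lambda$. *)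

From HB Require Import structures.
From mathcomp Require Import all_boot all_order all_algebra.
From mathcomp Require Import algC.
From mathcomp Require Import boolp.
Set Implicit Arguments. Unset Strict Implicit. Unset Printing Implicit Defensive.
Import Order.TTheory GRing.Theory Num.Theory.
Local Open Scope ring_scope.

Definition weight (n : nat) := {ffun 'I_n -> int}.

Definition rho_prec {n : nat} (lam : weight n) (j i : 'I_n) : bool :=
  (lam i < lam j) || ((lam j == lam i) && (j < i)%N).

(* rho(lambda)_i : the entry of ((n-1)/2, ..., -(n-1)/2) in position
   (number of indices preceding i); this is the unique permutation with
   rho_i > rho_j iff lambda_i > lambda_j or (lambda_i = lambda_j and i < j). *)
Definition rho {n : nat} (lam : weight n) (i : 'I_n) : rat :=
  ((n%:R - 1) / 2) - (#|[set j | rho_prec lam j i]|)%:R.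

(* Monomials c * u^e in the formal variable u (c nonzero complex algebraic,
   e rational exponent), multiplied componentwise. *)
Definition mon := (algC * rat)%type.
Definition mmul (x y : mon) : mon := (x.1 * y.1, x.2 + y.2).

Definition gk (k r : nat) : nat := gcdn k.+1 r.-1.

(* tau = exp(2 pi i/(r-1)) : the square of the (r-1)-th root of -1 with minimal
   nonnegative argument (= exp(i pi/(r-1))). *)
Definition tau (r : nat) : algC := ((r.-1).-root (-1 : algC)) ^+ 2.

(* specialization (star): t = u^((r-1)/g), q = tau * u^(-(k+1)/g) *)
Definition t_pow (k r : nat) (a : rat) : mon :=
  (1, a * ((r.-1)%:R / (gk k r)%:R)).
Definition q_pow (k r : nat) (b : int) : mon :=
  (tau r ^ b, - (b%:~R : rat) * ((k.+1)%:R / (gk k r)%:R)).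
Definition tq (k r : nat) (a : rat) (b : int) : mon := mmul (t_pow k r a) (q_pow k r b).

Definition u_lam (k r : nat) {n : nat} (lam : weight n) (i : 'I_n) : mon :=
  tq k r (- rho lam i) (- lam i).

(* A wheel (i_1, ..., i_{k+1}), encoded as a (k+1)-tuple (0-based positions). *)
Definition is_wheel {k : nat} (r : nat) {n : nat} (lam : weight n) (w : (k.+1).-tuple 'I_n) : Prop :=
  uniq w /\
  exists s : 'I_k -> nat,
    (\sum_(a < k) s a <= r - 2)%N /\
    forall a : 'I_k,
      let cur := tnth w (widen_ord (leqnSn k) a) in
      let nxt := tnth w (lift ord0 a) in
      u_lam k r lam nxt =
        mmul (mmul (u_lam k r lam cur) (t_pow k r 1)) (q_pow k r (s a)%:Z)
      /\ (s a = 0%N -> (cur < nxt)%N).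

Definition wheels (k r : nat) {n : nat} (lam : weight n) : {set (k.+1).-tuple 'I_n} :=
  [set w | `[< @is_wheel k r n lam w >]].

Definition rot_rel {k : nat} {n : nat} (w w' : (k.+1).-tuple 'I_n) : bool :=
  [exists m : 'I_(k.+1), val w' == rot m (val w)].

Definition sharp (k r : nat) {n : nat} (lam : weight n) : nat :=
  #| [set [set w' in wheels k r lam | rot_rel w w'] | w in wheels k r lam] |.

(* Equality of t^rho(mu)_i q^mu_i and t^rho(lam)_i q^lam_i at (star) means, tau being a
   primitive (r-1)-th root of unity, that mu_i = lam_i + m_i (r-1) while the rank of i
   (its position in the order defining rho) drops by m_i (k+1).  Call P a wheel top of nu
   when the elements of ranks P-k and P, say a and b, satisfy nu_b + r - 1 >= nu_a (ties
   broken by index): the k+1 elements of ranks P-k..P, read cyclically from a suitable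
   starting point, then form a wheel whose elements all have rank <= P, so distinct wheel
   tops give wheels that are not rotations of each other and sharp <= 1 allows only one.
   With a single wheel top, raising a comparison value by r-1 passes at most k+1 further
   elements, so raising the value of i by (c+1)(r-1) moves it up by fewer than (c+1)(k+1)
   places.  For the index i with m_i <> 0 whose larger value max(lam_i, mu_i) comes first,
   this contradicts the rank shift in the weight where i has the smaller value; so m = 0. *)

From HB Require Import structures.
From mathcomp Require Import all_boot all_order all_algebra.
From mathcomp Require Import algC cyclotomic.
From mathcomp Require Import boolp.
From mathcomp Require Import zify ring lra.
Import Order.TTheory GRing.Theory Num.Theory.
Set Implicit Arguments. Unset Strict Implicit. Unset Printing Implicit Defensive.
Local Open Scope ring_scope.

Definition prec (V1 : int) (i1 : nat) (V2 : int) (i2 : nat) : bool :=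
  (V2 < V1) || ((V1 == V2) && (i1 < i2)%N).

Lemma precP V1 i1 V2 i2 :
  reflect (V2 < V1 \/ V1 = V2 /\ (i1 < i2)%N) (prec V1 i1 V2 i2).
Proof.
by apply: (iffP orP) => [[|/andP[/eqP]]|[|[->]]]; auto; rewrite eqxx => ->; right.
Qed.

Lemma prec_irr V i : prec V i V i = false.
Proof. by apply/precP; lia. Qed.

Lemma prec_trans V1 i1 V2 i2 V3 i3 :
  prec V1 i1 V2 i2 -> prec V2 i2 V3 i3 -> prec V1 i1 V3 i3.
Proof. by move=> /precP ? /precP ?; apply/precP; lia. Qed.

Lemma prec_total V1 i1 V2 i2 :
  i1 <> i2 -> ~~ prec V1 i1 V2 i2 -> prec V2 i2 V1 i1.
Proof. by move=> ? /precP ?; apply/precP; lia. Qed.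

Lemma prec_nprec_trans V1 i1 V2 i2 V3 i3 :
  prec V1 i1 V2 i2 -> ~~ prec V3 i3 V2 i2 -> prec V1 i1 V3 i3.
Proof. by move=> /precP ? /precP ?; apply/precP; lia. Qed.

Lemma prec_addr V1 i1 V2 i2 c : prec (V1 + c) i1 (V2 + c) i2 = prec V1 i1 V2 i2.
Proof. by apply/precP/precP; lia. Qed.

Section Rank.
Variables (n : nat) (nu : weight n).

Definition rank (i : 'I_n) : nat := #|[set j | rho_prec nu j i]|.

Lemma rho_precE j i : rho_prec nu j i = prec (nu j) j (nu i) i.
Proof. by []. Qed.

Lemma rank_ltn i : (rank i < n)%N.
Proof.
rewrite -[n]card_ord -cardsT; apply: proper_card; apply/properP.
by split; [exact: subsetT | exists i; rewrite !inE ?rho_precE ?prec_irr].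
Qed.

Lemma ltn_rank j i : (rank j < rank i)%N = prec (nu j) j (nu i) i.
Proof.
have lt_rank l m : prec (nu l) l (nu m) m -> (rank l < rank m)%N.
  move=> lm; apply: proper_card; apply/properP; split.
    by apply/subsetP => x; rewrite !inE => /prec_trans; apply.
  by exists l; rewrite !inE ?rho_precE ?prec_irr.
apply/idP/idP => [ji | /lt_rank //]; apply: contraTT ji => nji.
have [<-|neq] := eqVneq j i; first by rewrite ltnn.
rewrite -leqNgt ltnW // lt_rank // prec_total // => /val_inj /eqP.
by rewrite (negbTE neq).
Qed.

Lemma rank_inj : injective rank.
Proof.
move=> i j eq_ij; apply: contraTeq isT => neq.
have := @prec_total (nu i) i (nu j) j; rewrite -!ltn_rank eq_ij ltnn.
by apply=> // /val_inj /eqP; rewrite (negbTE neq).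
Qed.

Definition unrank (i0 : 'I_n) (h : nat) : 'I_n := odflt i0 [pick j | rank j == h].

Lemma rank_unrank i0 h : (h < n)%N -> rank (unrank i0 h) = h.
Proof.
move=> lthn; rewrite /unrank; case: pickP => [j /eqP //| none].
have rank_ord_inj : injective (fun i => Ordinal (rank_ltn i)).
  by move=> i j /(congr1 val) /rank_inj.
have [g _ gK] := injF_bij rank_ord_inj.
have /= rank_g := congr1 val (gK (Ordinal lthn)).
by have := none (g (Ordinal lthn)); rewrite rank_g eqxx.
Qed.

Lemma card_le_rank_interval (D : {set 'I_n}) lo hi :
  {in D, forall j, lo <= rank j <= hi}%N -> (#|D| <= hi.+1 - lo)%N.
Proof.
move=> HD; rewrite cardE -(size_map rank) -(size_iota lo (hi.+1 - lo)).
apply: uniq_leq_size; first by rewrite map_inj_uniq ?enum_uniq //; exact: rank_inj.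
move=> x /mapP [j]; rewrite mem_enum => /HD Hj ->; rewrite mem_iota; lia.
Qed.

Definition count_before (V : int) (i : 'I_n) : nat := #|[set j | prec (nu j) j V i]|.

Lemma count_before_rank i : count_before (nu i) i = rank i.
Proof. by []. Qed.

End Rank.

Section WheelPositions.
Variables (n : nat) (nu : weight n) (N k : nat).

(* [P] is a wheel top of [nu] (for [N = r - 1]). *)
Definition wheel_at (P : nat) : Prop := exists a b : 'I_n,
  [/\ (rank nu a + k)%N = P, rank nu b = P & prec (nu b + N%:Z) b (nu a) a].

Definition unique_wheel_at : Prop :=
  forall P1 P2, wheel_at P1 -> wheel_at P2 -> P1 = P2.

Lemma prec_rank_le V i (a a' : 'I_n) : (rank nu a <= rank nu a')%N ->
  prec V i (nu a) a -> prec V i (nu a') a'.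
Proof.
rewrite leq_eqVlt => /orP [/eqP/rank_inj -> // | ].
by rewrite ltn_rank => aa' /prec_trans; apply.
Qed.

Lemma wheel_at_top_two (a b : 'I_n) : (rank nu a + k < rank nu b)%N ->
  prec (nu b + N%:Z) b (nu a) a -> wheel_at (rank nu b) /\ wheel_at (rank nu b).-1.
Proof.
move=> spread ba; have rb := rank_ltn nu b.
split.
  exists (unrank nu b (rank nu b - k)), b; rewrite rank_unrank; last lia.
  split => //; [lia | apply: prec_rank_le ba; rewrite rank_unrank; lia].
exists (unrank nu b (rank nu b - k.+1)), (unrank nu b (rank nu b).-1).
rewrite !rank_unrank; try lia; split => //; first lia.
apply: prec_rank_le (prec_trans _ ba); first by rewrite rank_unrank; lia.
by rewrite prec_addr -ltn_rank rank_unrank; lia.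
Qed.

Hypothesis uniq_wheel : unique_wheel_at.

Lemma card_le_of_spread (D : {set 'I_n}) :
  {in D &, forall a b, (rank nu a < rank nu b)%N -> prec (nu b + N%:Z) b (nu a) a} ->
  (#|D| <= k.+1)%N.
Proof.
move=> spread; rewrite leqNgt; apply/negP => Dbig.
have [a0 Da0] : exists a0, a0 \in D by apply/set0Pn; rewrite -card_gt0; lia.
case: (arg_minnP (rank nu) Da0) => a Da amin.
case: (arg_maxnP (rank nu) Da0) => b Db bmax.
have Dle := @card_le_rank_interval _ nu D _ _
  (fun j Dj => introT andP (conj (amin j Dj) (bmax j Dj))).
have ab : (rank nu a + k < rank nu b)%N by lia.
have [Wb Wb1] := wheel_at_top_two ab (spread a b Da Db ltac:(lia)).
by have := uniq_wheel Wb Wb1; lia.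
Qed.

Lemma count_before_split V i : count_before nu V i =
  (count_before nu (V + N%:Z) i +
   #|[set j | prec (nu j) j V i & ~~ prec (nu j) j (V + N%:Z) i]|)%N.
Proof.
rewrite /count_before -(cardsID [set j | prec (nu j) j (V + N%:Z) i]).
congr (_ + _)%N; apply: eq_card => j; rewrite !inE //.
  by apply/andP/idP => [[]//| /[dup] /precP ? ->]; split => //; apply/precP; lia.
by rewrite andbC.
Qed.

Lemma count_before_shift V i :
  (count_before nu V i <= count_before nu (V + N%:Z) i + k.+1)%N.
Proof.
rewrite count_before_split leq_add2l; apply: card_le_of_spread => a b.
rewrite !inE => /andP[_ na] /andP[bV _] _.
by apply: prec_nprec_trans na; rewrite prec_addr.
Qed.

Lemma rank_lt_count_before i :
  (rank nu i < count_before nu (nu i + N%:Z) i + k.+1)%N.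
Proof.
rewrite -count_before_rank count_before_split ltn_add2l.
set D := [set j | _ & _].
have Di : i \notin D by rewrite inE prec_irr.
suff : (#|i |: D| <= k.+1)%N by rewrite cardsU1 Di.
apply: card_le_of_spread => a b.
rewrite !inE => /predU1P[-> | Da] /predU1P[-> | Db] ab.
- by rewrite ltnn in ab.
- by move: Db ab => /andP[]; rewrite -ltn_rank; lia.
- apply: prec_total; last by case/andP: Da.
  by move=> /val_inj ai; rewrite ai ltnn in ab.
- case/andP: Da => _ na; case/andP: Db => bi _.
  by apply: prec_nprec_trans na; rewrite prec_addr.
Qed.

Lemma rank_lt_count_before_shift i c :
  (rank nu i < count_before nu (nu i + N%:Z *+ c.+1) i + c.+1 * k.+1)%N.
Proof.
elim: c => [|c IH]; first by rewrite mulr1n mul1n; exact: rank_lt_count_before.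
have := count_before_shift (nu i + N%:Z *+ c.+1) i.
rewrite -addrA -mulrSr mulSn; move: IH.
by move: (count_before _ _ _) (count_before _ _ _) (c.+1 * k.+1)%N => ? ? ?; lia.
Qed.

End WheelPositions.

Lemma raised_first_index_contra n (A B : weight n) N k (m : 'I_n -> int) i : (0 < N)%N ->
  unique_wheel_at A N k ->
  (forall j, B j = A j + m j * N%:Z) ->
  (forall j, (rank A j)%:Z = (rank B j)%:Z + m j * (k.+1)%:Z) ->
  0 < m i ->
  (forall j, m j != 0 -> ~~ prec (Num.max (A j) (B j)) j (Num.max (A i) (B i)) i) ->
  False.
Proof.
move=> N0 uniqA Bm rankm mi_gt0 imin.
have [c mi] : exists c : nat, m i = c.+1 by exists `|m i|.-1; lia.
have Bi : B i = A i + N%:Z *+ c.+1 by rewrite Bm mi mulrC -[Posz c.+1]natz mulr_natr.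
have maxBi : Num.max (A i) (B i) = B i.
  by apply/max_idPr; rewrite Bi lerDl mulrn_wge0.
have lt_count := rank_lt_count_before_shift uniqA i c; rewrite -Bi in lt_count.
have : (count_before A (B i) i <= rank B i)%N.
  apply: subset_leq_card; apply/subsetP => j; rewrite !inE => Aj.
  case: (ltrgtP (m j) 0) => mj.
  - have maxAj : Num.max (A j) (B j) = A j by apply/max_idPl; rewrite Bm; nia.
    by have := imin j (ltr0_neq0 mj); rewrite maxAj maxBi Aj.
  - by apply: prec_trans Aj; apply/precP; left; rewrite Bm; nia.
  - by rewrite rho_precE (_ : B j = A j) // Bm mj mul0r addr0.
have := rankm i; rewrite mi -PoszM.
by move: lt_count; move: (count_before _ _ _) (c.+1 * k.+1)%N => ? ?; lia.
Qed.

Lemma shifted_weight_eq n (lam mu : weight n) N k (m : 'I_n -> int) : (0 < N)%N ->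
  unique_wheel_at lam N k -> unique_wheel_at mu N k ->
  (forall i, mu i = lam i + m i * N%:Z) ->
  (forall i, (rank lam i)%:Z = (rank mu i)%:Z + m i * (k.+1)%:Z) ->
  mu = lam.
Proof.
move=> N0 uniq_lam uniq_mu mum rankm.
suff m0 i : m i = 0 by apply/ffunP => i; rewrite mum m0 mul0r addr0.
apply/eqP; apply: contraT => mi; exfalso.
pose e := [ffun j => Num.max (lam j) (mu j)].
case: (@arg_minnP _ i (fun j => m j != 0) (rank e) mi) => i0 mi0 i0min.
have e_min j : m j != 0 -> ~~ prec (e j) j (e i0) i0.
  by move=> /i0min; rewrite leqNgt ltn_rank.
case: (ltrgtP (m i0) 0) => [neg | pos | eq]; last by rewrite eq eqxx in mi0.
- apply: (@raised_first_index_contra n mu lam N k (fun j => - m j) i0) => //.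
  + by move=> j; rewrite mum mulNr addrK.
  + by move=> j; rewrite rankm mulNr addrK.
  + by rewrite oppr_gt0.
  + by move=> j; rewrite oppr_eq0 => /e_min; rewrite !ffunE (maxC (lam j)) (maxC (lam i0)).
- apply: (@raised_first_index_contra n lam mu N k m i0) => // j.
  by move=> /e_min; rewrite !ffunE.
Qed.

Section UnitCircle.
Variable C : numClosedFieldType.
Implicit Types y : C.

Lemma norm_eq1_of_exprN1 N y : (0 < N)%N -> y ^+ N = -1 -> `|y| = 1.
Proof.
move=> N0 yN; apply/eqP; rewrite -(pexpr_eq1 N0) ?normr_ge0 //.
by rewrite -normrX yN normrN1.
Qed.

Lemma normC_subr_sqr y : `|y| = 1 -> `|1 - y| ^+ 2 = 2 - 2 * 'Re y.
Proof.
move=> y1; have := normC2_Re_Im y; rewrite y1 expr1n normC2_Re_Im !raddfB /=.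
rewrite (Creal_ReP 1 (rpred1 _)) (Creal_ImP 1 (rpred1 _)).
move: ('Re y) ('Im y) => a b sq1.
by transitivity (2 - 2 * a + (a ^+ 2 + b ^+ 2 - 1)); [ring | rewrite -sq1 subrr addr0].
Qed.

Lemma Re_le_rootCN1 N y : (1 < N)%N -> y ^+ N = -1 -> 'Re y <= 'Re (N.-root (-1)).
Proof.
move=> N1 yN; have N0 : (0 < N)%N by lia.
have /orP[Im_ge0 | Im_le0] : (0 <= 'Im y) || ('Im y <= 0).
  by rewrite real_leVge ?Creal_Im ?rpred0.
- exact: rootC_Re_max.
- rewrite -Re_conj; apply: rootC_Re_max => //; first by rewrite -rmorphXn yN rmorphN1.
  by rewrite Im_conj oppr_ge0.
Qed.

Lemma dist1_rootCN1_le N y : (1 < N)%N -> y ^+ N = -1 ->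
  `|1 - N.-root (-1)| <= `|1 - y|.
Proof.
move=> N1 yN; have N0 : (0 < N)%N by lia.
rewrite -(ler_pXn2r (isT : (0 < 2)%N)) ?nnegrE ?normr_ge0 //.
rewrite !normC_subr_sqr; [|exact: norm_eq1_of_exprN1 yN|].
  by rewrite lerD2l lerN2 ler_pM2l ?ltr0n // Re_le_rootCN1.
by apply: (norm_eq1_of_exprN1 N0); rewrite rootCK.
Qed.

Lemma sum_norm_le1_eq1 p (S : 'I_p -> C) :
  (forall t, `|S t| <= 1) -> \sum_t S t = p%:R -> forall t, S t = 1.
Proof.
move=> S_le1 sumS t.
have Re_le1 u : 'Re (S u) <= 1 by apply: le_trans (S_le1 u); exact: leif_Re_Creal.
have Re1 : 'Re (S t) = 1.
  have sum0 : \sum_(u < p) (1 - 'Re (S u)) = 0.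
    rewrite sumrB sumr_const card_ord -raddf_sum sumS.
    by rewrite /= (_ : 'Re p%:R = p%:R) ?subrr //; apply/Creal_ReP; exact: rpred_nat.
  have Re_ge0 u : true -> 0 <= 1 - 'Re (S u) by rewrite subr_ge0.
  by have /eqP := psumr_eq0P Re_ge0 sum0 (i := t) isT; rewrite subr_eq0 => /eqP.
have Im0 : 'Im (S t) = 0.
  have : `|S t| ^+ 2 <= 1 by rewrite exprn_ile1 ?normr_ge0.
  rewrite normC2_Re_Im Re1 expr1n -[X in _ <= X]addr0 lerD2l => Im_le0.
  apply/eqP; rewrite -sqrf_eq0 eq_le Im_le0.
  exact: real_exprn_even_ge0 (Creal_Im _) _.
by rewrite [S t]Crect Re1 Im0 mulr0 addr0.
Qed.

End UnitCircle.

Lemma sum_expr_prim_root_eq0 (F : fieldType) p (eta : F) j :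
  p.-primitive_root eta -> ~~ (p %| j)%N -> \sum_(t < p) (eta ^+ j) ^+ t = 0.
Proof.
move=> eta_prim pj; have := subrX1 (eta ^+ j) p.
rewrite [eta ^+ j ^+ p]exprAC (prim_expr_order eta_prim) expr1n subrr => /esym/eqP.
by rewrite mulf_eq0 subr_eq0 -(prim_order_dvd eta_prim) (negbTE pj) => /eqP.
Qed.

Lemma prim_root_expfz_eq1 (F : fieldType) N (w : F) (d : int) :
  N.-primitive_root w -> w ^ d = 1 -> (N%:Z %| d)%Z.
Proof.
move=> w_prim; rewrite dvdzE; case: d => j /=; rewrite (prim_order_dvd w_prim).
  by move=> wj; apply/eqP.
by rewrite NegzE -invr_expz => /eqP; rewrite invr_eq1.
Qed.

(* Otherwise every p-th root y of z satisfies y ^+ (p * o) = -1, hence is no closer to 1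
   than z; so the geometric sums S_y = (1 - z) / (1 - y) have norm <= 1, while they average
   to 1 over the p such roots y, which forces all of them to equal z. *)
Lemma rootCN1_expr_neqN1 p o : (1 < p)%N -> (0 < o)%N ->
  ((p * o).-root (-1 : algC)) ^+ o != -1.
Proof.
move=> p1 o0; set z := (p * o).-root (-1 : algC); apply/eqP => zo.
have po1 : (1 < p * o)%N by nia.
have [eta eta_prim] := C_prim_root_exists (ltnW p1).
pose y t := p.-root z * eta ^+ t.
have yp t : y t ^+ p = z.
  rewrite exprMn rootCK; last lia.
  by rewrite exprAC (prim_expr_order eta_prim) expr1n mulr1.
pose S t := \sum_(j < p) y t ^+ j.
have S_eq t : (1 - y t) * S t = 1 - z.
  by apply: oppr_inj; rewrite -mulNr !opprB -subrX1 yp.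
have z_neq1 : z != 1.
  apply/eqP => z1; move: zo; rewrite z1 expr1n => N1.
  by move: (@ltrN10 algC); rewrite -N1 ltr10.
have S_le1 t : `|S t| <= 1.
  have z_lt : `|1 - z| <= `|1 - y t|.
    by apply: dist1_rootCN1_le => //; rewrite exprM yp.
  have z_gt0 : 0 < `|1 - z| by rewrite normr_gt0 subr_eq0 eq_sym.
  rewrite -(ler_pM2r (lt_le_trans z_gt0 z_lt)) mul1r mulrC -normrM S_eq.
  exact: z_lt.
have sumS : \sum_(t < p) S t = p%:R.
  rewrite /S exchange_big /= (bigD1 (Ordinal (ltnW p1))) //= [X in _ + X]big1.
    by under eq_bigr do rewrite expr0; rewrite sumr_const card_ord addr0.
  move=> j j0; under eq_bigr => t _ do rewrite /y exprMn exprAC.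
  rewrite -mulr_sumr sum_expr_prim_root_eq0 ?mulr0 //.
  by apply: contra j0; rewrite /dvdn modn_small // => /eqP j_0; apply/eqP/val_inj.
have y_eq_z (t : 'I_p) : y t = z.
  by have := S_eq t; rewrite (sum_norm_le1_eq1 S_le1 sumS t) mulr1 => /addrI/oppr_inj.
have root_neq0 : p.-root z != 0.
  by rewrite rootC_eq0 1?ltnW // rootC_eq0 ?oppr_eq0 ?oner_eq0 //; lia.
have eta1 : eta = 1.
  have := y_eq_z (Ordinal p1); rewrite -(y_eq_z (Ordinal (ltnW p1))) /y /= expr0 mulr1.
  by rewrite -[RHS]mulr1 => /(mulfI root_neq0).
by have := prim_order_dvd eta_prim 1; rewrite eta1 expr1n eqxx => /dvdn_leq; lia.
Qed.

Lemma rootCN1_sqr_prim N : (0 < N)%N -> N.-primitive_root ((N.-root (-1 : algC)) ^+ 2).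
Proof.
move=> N0; set z := N.-root (-1 : algC); have zN : z ^+ N = -1 by rewrite rootCK.
have wN : (z ^+ 2) ^+ N = 1 by rewrite exprAC zN expr2 mulrNN mulr1.
have [o o_prim oN] := prim_order_exists N0 wN.
have o0 := prim_order_gt0 o_prim.
have [p Np] : exists p, N = (p * o)%N by exists (N %/ o)%N; rewrite divnK.
have zo : z ^+ o = -1.
  have /eqP := prim_expr_order o_prim; rewrite -exprM mulnC exprM sqrf_eq1.
  case/orP=> /eqP // zo1; move: zN; rewrite Np mulnC exprM zo1 expr1n => N1.
  by move: (@ltrN10 algC); rewrite -N1 ltr10.
have [p0 | p1 | p1] := ltngtP p 1; last by rewrite Np p1 mul1n.
  by move: N0; rewrite Np; lia.
by move: zo; rewrite /z Np => /eqP; rewrite (negbTE (rootCN1_expr_neqN1 _ _)).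
Qed.

Lemma tau_prim r : (2 <= r)%N -> (r.-1).-primitive_root (tau r).
Proof. by move=> r2; apply: rootCN1_sqr_prim; lia. Qed.

Lemma tau_neq0 r : (2 <= r)%N -> tau r != 0.
Proof.
move=> r2; apply/eqP => tau0; have := prim_expr_order (tau_prim r2).
have /negPf r1 : r.-1 != 0%N by lia.
by rewrite tau0 expr0n r1 => /eqP; rewrite eq_sym oner_eq0.
Qed.

Lemma tq_eq k r a b a' b' : (2 <= r)%N -> tq k r a b = tq k r a' b' ->
  ((r.-1)%:Z %| b - b')%Z /\ (a - a') * (r.-1)%:R = (b - b')%:~R * (k.+1)%:R.
Proof.
move=> r2 [tau_eq exp_eq]; split.
  apply: prim_root_expfz_eq1 (tau_prim r2) _.
  rewrite expfzDr ?tau_neq0 // -invr_expz; rewrite !mul1r in tau_eq.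
  by rewrite tau_eq mulfV // expfz_neq0 // tau_neq0.
have g0 : (gk k r)%:R != 0 :> rat by rewrite pnatr_eq0 -lt0n gcdn_gt0.
move: exp_eq; rewrite rmorphB /= => /(congr1 (fun x => x * (gk k r)%:R)).
by rewrite !mulrDl -!mulrA !mulVf // !mulr1; lra.
Qed.

Lemma rho_sub n (lam mu : weight n) i :
  rho mu i - rho lam i = (rank lam i)%:R - (rank mu i)%:R.
Proof. by rewrite /rho -/(rank mu i) -/(rank lam i); ring. Qed.

Lemma tq_rho_eq n k r (lam mu : weight n) i : (2 <= r)%N ->
  tq k r (rho mu i) (mu i) = tq k r (rho lam i) (lam i) ->
  ((r.-1)%:Z %| mu i - lam i)%Z /\
  (rank lam i)%:Z = (rank mu i)%:Z + ((mu i - lam i) %/ (r.-1)%:Z)%Z * (k.+1)%:Z.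
Proof.
move=> r2 /(tq_eq r2) [dvd exp_eq]; split => //.
have r1 : (r.-1)%:R != 0 :> rat by rewrite pnatr_eq0; lia.
apply: (@intr_inj rat); rewrite rmorphD rmorphM /= -!pmulrn.
rewrite -(divzK dvd) rho_sub rmorphM /= -pmulrn mulrAC in exp_eq.
by rewrite -(mulIf r1 exp_eq) addrC subrK.
Qed.

Lemma tq_opp k r a b : tq k r (- a) (- b) = ((tq k r a b).1^-1, - (tq k r a b).2).
Proof.
rewrite /tq /mmul /t_pow /q_pow /= !mul1r invr_expz rmorphN /=.
by congr pair; ring.
Qed.

(* A wrap-around step trades t^-(k+1) for q^(r-1), since t^(k+1) q^(r-1) = 1 at (star). *)
Lemma u_lam_step n k r (nu : weight n) (cur nxt : 'I_n) (wrap : bool) (s : nat) :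
  (2 <= r)%N ->
  (rank nu nxt)%:Z = (rank nu cur)%:Z + 1 - (wrap * k.+1)%:Z ->
  s%:Z = nu cur - nu nxt + (wrap * r.-1)%:Z ->
  u_lam k r nu nxt = mmul (mmul (u_lam k r nu cur) (t_pow k r 1)) (q_pow k r s).
Proof.
move=> r2 rank_nxt s_eq; rewrite /u_lam /tq /mmul /t_pow /q_pow /=; congr pair.
  have wrap1 : tau r ^ (- (wrap * r.-1)%:Z) = 1.
    rewrite -invr_expz mulnC -[tau r ^ _]/(tau r ^+ (r.-1 * wrap)) exprM.
    by rewrite (prim_expr_order (tau_prim r2)) expr1n invr1.
  have -> : - nu nxt = - nu cur + s%:Z + - (wrap * r.-1)%:Z by rewrite s_eq; ring.
  by rewrite !mul1r mulr1 !expfzDr ?tau_neq0 // wrap1 mulr1.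
move: rank_nxt s_eq => /(congr1 (fun z : int => z%:~R : rat)) rank_nxt.
move=> /(congr1 (fun z : int => z%:~R : rat)) s_eq.
rewrite /rho -/(rank nu nxt) -/(rank nu cur) !rmorphN /=.
rewrite !(intrD, intrB) -!pmulrn !natrM in rank_nxt s_eq.
by rewrite -!pmulrn rank_nxt s_eq; ring.
Qed.

Lemma modnS_eq m d : (m.+1 %% d.+1 = if m %% d.+1 == d then 0 else (m %% d.+1).+1)%N.
Proof.
rewrite -addn1 -modnDml; case: eqP => [-> | ne]; first by rewrite addn1 modnn.
by rewrite addn1 modn_small //; have := ltn_pmod m (ltn0Sn d); lia.
Qed.

Lemma sum_shift_periodic (V : nmodType) p o (f : nat -> V) :
  (forall h, f (h + p)%N = f h) -> \sum_(h < p) f (o + h)%N = \sum_(h < p) f h.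
Proof.
move=> f_per; elim: o => // o <-; case: p f_per => [|p] f_per; first by rewrite !big_ord0.
rewrite big_ord_recr [RHS]big_ord_recl /= addSnnS f_per addn0 addrC.
by congr (_ + _); apply: eq_bigr => h _; rewrite /bump /= add1n addSnnS.
Qed.

Section WheelFromPair.
Variables (n k r : nat) (nu : weight n) (a b : 'I_n).
Hypothesis r2 : (2 <= r)%N.
Hypothesis rank_ab : (rank nu a + k)%N = rank nu b.
Hypothesis prec_ba : prec (nu b + (r.-1)%:Z) b (nu a) a.

(* [step h] is the exponent s of the cyclic step from [c h] to [c h.+1]; these steps are
   nonnegative and sum to r - 1 over a period, so dropping a positive one leaves a wheel. *)
Let c (h : nat) : 'I_n := unrank nu b (rank nu a + h %% k.+1)%N.
Let wrap (h : nat) : bool := (h %% k.+1 == k)%N.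
Let step (h : nat) : int := nu (c h) - nu (c h.+1) + (wrap h * r.-1)%:Z.

Let rank_c h : rank nu (c h) = (rank nu a + h %% k.+1)%N.
Proof.
by rewrite rank_unrank //; have := rank_ltn nu b; have := ltn_pmod h (ltn0Sn k); lia.
Qed.

Let c_periodic h : c (h + k.+1) = c h.
Proof. by rewrite /c modnDr. Qed.

Let step_periodic h : step (h + k.+1) = step h.
Proof. by rewrite /step /wrap -addSn !c_periodic modnDr. Qed.

Let cyclic_step h :
  prec (nu (c h)) (c h) (nu (c h.+1) - (wrap h * r.-1)%:Z) (c h.+1) /\
  (rank nu (c h.+1))%:Z = (rank nu (c h))%:Z + 1 - (wrap h * k.+1)%:Z.
Proof.
have rank_cS := rank_c h.+1; rewrite modnS_eq in rank_cS.
rewrite /wrap; case: eqP => [hk | hk] /= in rank_cS *.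
  have -> : c h = b by apply: (@rank_inj _ nu); rewrite rank_c hk rank_ab.
  have -> : c h.+1 = a by apply: (@rank_inj _ nu); rewrite rank_cS addn0.
  by rewrite mul1n -(prec_addr _ _ _ _ (r.-1)%:Z) subrK; split => //; lia.
rewrite mul0n subr0 -ltn_rank rank_c rank_cS; split; lia.
Qed.

Let step_ge0 h : 0 <= step h /\ (step h = 0 -> (c h < c h.+1)%N).
Proof. by have [/precP step_prec _] := cyclic_step h; rewrite /step; split; lia. Qed.

Let sum_step : \sum_(h < k.+1) step h = (r.-1)%:Z.
Proof.
have telescope : \sum_(h < k.+1) (nu (c h) - nu (c h.+1)) = 0.
  under eq_bigr do rewrite -opprB; rewrite sumrN.
  rewrite -(big_mkord xpredT (fun h => nu (c h.+1) - nu (c h))) telescope_sumr //.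
  by rewrite -[k.+1]add0n c_periodic subrr oppr0.
rewrite /step big_split /= telescope add0r big_ord_recr /= big1 ?add0r.
  by rewrite /wrap modn_small ?eqxx ?mul1n.
by move=> h _; rewrite /wrap modn_small ?(ltn_eqF (ltn_ord h)) // ltnS ltnW.
Qed.

Let exists_step_gt0 : exists2 h0, (h0 < k.+1)%N & 0 < step h0.
Proof.
have /existsP [h0 step_h0] : [exists h0 : 'I_k.+1, 0 < step h0].
  apply: contraT => /existsPn all_le0.
  have := sum_step; rewrite big1 => [|h _]; first lia.
  by have := all_le0 h; have := step_ge0 h; lia.
by exists h0.
Qed.

Let w (h0 : nat) : (k.+1).-tuple 'I_n := [tuple c (h0.+1 + x) | x < k.+1].

Let w_uniq h0 : uniq (w h0).
Proof.
apply/tuple_uniqP => x y; rewrite !tnth_mktuple => /(congr1 (rank nu)).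
rewrite !rank_c => /eqP; rewrite eqn_add2l eqn_modDl !modn_small // => /eqP.
exact: val_inj.
Qed.

Let w_sum h0 : 0 < step h0 -> (\sum_(x < k) `|step (h0.+1 + x)|%N <= r - 2)%N.
Proof.
move=> step_h0; have sum_eq : \sum_(x < k) step (h0.+1 + x) = (r.-1)%:Z - step h0.
  have := sum_step; rewrite -(sum_shift_periodic h0.+1) // big_ord_recr /=.
  by rewrite addSnnS step_periodic => <-; rewrite addrK.
have : (\sum_(x < k) `|step (h0.+1 + x)|%N)%:Z = (r.-1)%:Z - step h0.
  rewrite -sum_eq (big_morph Posz PoszD (erefl 0%:Z)).
  by apply: eq_bigr => x _; rewrite gez0_abs //; case: (step_ge0 (h0.+1 + x)).
by move: (\sum_(x < k) _)%N; lia.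
Qed.

Let w_wheel h0 : 0 < step h0 -> is_wheel r nu (w h0).
Proof.
move=> step_h0; split; first exact: w_uniq.
exists (fun x : 'I_k => `|step (h0.+1 + x)|%N); split; first exact: w_sum.
move=> x; rewrite !tnth_mktuple /= /bump /= add1n addnS.
have [step_x0 step_x] := step_ge0 (h0.+1 + x).
have [_ rank_step] := cyclic_step (h0.+1 + x).
split; first by apply: u_lam_step r2 rank_step _; rewrite gez0_abs.
by move=> /eqP; rewrite absz_eq0 => /eqP.
Qed.

Let b_in_w h0 : (h0 < k.+1)%N -> b \in w h0.
Proof.
move=> lt_h0; apply/tnthP; exists (Ordinal (ltn_pmod (k + k.+1 - h0.+1) (ltn0Sn k))).
rewrite tnth_mktuple; apply: (@rank_inj _ nu); rewrite rank_c /= modnDmr.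
by rewrite -rank_ab (_ : h0.+1 + _ = k + k.+1)%N ?modnDr ?modn_small //; lia.
Qed.

Let w_rank_le h0 : all (fun x => rank nu x <= rank nu b)%N (w h0).
Proof.
apply/allP => x /tnthP [i ->].
by rewrite tnth_mktuple rank_c -rank_ab leq_add2l -ltnS ltn_pmod.
Qed.

Lemma wheel_of_pair : exists2 w : (k.+1).-tuple 'I_n,
  w \in wheels k r nu & (b \in w) && all (fun x => rank nu x <= rank nu b)%N w.
Proof.
have [h0 lt_h0 step_h0] := exists_step_gt0.
by exists (w h0); rewrite ?inE ?asboolE ?b_in_w ?w_rank_le //; exact: w_wheel.
Qed.

End WheelFromPair.

Lemma sharp_ge2 n k r (nu : weight n) (w1 w2 : (k.+1).-tuple 'I_n) x :
  w1 \in wheels k r nu -> w2 \in wheels k r nu -> x \in w2 -> x \notin w1 ->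
  (1 < sharp k r nu)%N.
Proof.
move=> w1W w2W xw2 xw1.
pose C w := [set w' in wheels k r nu | rot_rel w w'].
have C_neq : C w1 != C w2.
  apply: contraNneq xw1 => C12; have : w2 \in C w1.
    by rewrite C12 inE w2W; apply/existsP; exists ord0; rewrite rot0.
  by rewrite inE => /andP[_ /existsP[m /eqP w2_rot]]; rewrite -(mem_rot m) -w2_rot.
apply: leq_trans (_ : #|[set C w1; C w2]| <= _)%N; first by rewrite cards2 C_neq.
by apply/subset_leq_card/subsetP => _ /set2P[] ->; apply: imset_f.
Qed.

Lemma unique_wheel_at_of_sharp n k r (nu : weight n) : (2 <= r)%N ->
  (sharp k r nu <= 1)%N -> unique_wheel_at nu r.-1 k.
Proof.
move=> r2 sharp1.
suff lt_contra P1 P2 : wheel_at nu r.-1 k P1 -> wheel_at nu r.-1 k P2 -> ~~ (P1 < P2)%N.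
  by move=> P1 P2 W1 W2; have := lt_contra _ _ W1 W2; have := lt_contra _ _ W2 W1; lia.
move=> [a1 [b1 [ra1 rb1 ab1]]] [a2 [b2 [ra2 rb2 ab2]]]; apply/negP => lt12.
have [w1 w1W /andP[_ /allP w1_le]] := wheel_of_pair r2 (etrans ra1 (esym rb1)) ab1.
have [w2 w2W /andP[b2w2 _]] := wheel_of_pair r2 (etrans ra2 (esym rb2)) ab2.
have b2w1 : b2 \notin w1 by apply/negP => /w1_le; lia.
by have := sharp_ge2 w1W w2W b2w2 b2w1; lia.
Qed.

Lemma wheels_eq n k r (lam mu : weight n) :
  (forall i, u_lam k r mu i = u_lam k r lam i) -> wheels k r mu = wheels k r lam.
Proof. by move=> u_eq; rewrite /wheels /is_wheel (funext u_eq). Qed.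

Theorem lemma4p7 (n k r : nat) (lam : weight n) :
  (1 <= k <= n - 1)%N -> (2 <= r)%N ->
  (sharp k r lam <= 1)%N ->
  forall mu : weight n, mu <> lam ->
  ~ (forall i : 'I_n, tq k r (rho mu i) (mu i) = tq k r (rho lam i) (lam i)).
Proof.
move=> _ r2 sharp_lam mu mu_neq tq_mu; apply: mu_neq.
have sharp_mu : (sharp k r mu <= 1)%N.
  by rewrite /sharp (@wheels_eq _ _ _ lam) // => i; rewrite /u_lam !tq_opp tq_mu.
pose m i := ((mu i - lam i) %/ (r.-1)%:Z)%Z.
apply: (@shifted_weight_eq n lam mu r.-1 k m); first lia.
- exact: unique_wheel_at_of_sharp.
- exact: unique_wheel_at_of_sharp.
- by move=> i; have [dvd _] := tq_rho_eq r2 (tq_mu i); rewrite divzK // addrC subrK.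
- by move=> i; have [_ ->] := tq_rho_eq r2 (tq_mu i).
Qed.
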